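(* Let $Q$ be a quantity space over a field $K$. For every $x\in[1_Q]$ (the class of $1_Q$ under $\sim$), the measure $\mu_E(x)$ does not depend on the basis $E$ of $Q$.
   Context: A scalable monoid over a (unital, associative) ring $R$ is a monoid $X$ (identity $1_X$, product written $xy$) together with a map $R\times X\to X$, $(\alpha,x)\mapsto\alpha\cdot x$, such that $1\cdot x=x$, $\alpha\cdot(\beta\cdot x)=\alpha\beta\cdot x$ and $\alpha\cdot(xy)=(\alpha\cdot x)y=x(\alpha\cdot y)$. A quantity space over a field $K$ is a commutative scalable monoid $Q$ over $K$ for which there exists a basis, i.e. a finite set $E=\{e_1,\ldots,e_n\}$ of invertible elements of $Q$ such that every $x\in Q$ has a unique expansion $x=\mu\cdot\prod_{i=1}^n e_i^{k_i}$ with $\mu\in K$ and $k_i\in\mathbb{Z}$; the scalar $\mu$ is the measure $\mu_E(x)$ of $x$ relative to $E$. On $Q$, $x\sim y$ iff $\alpha\cdot x=\beta\cdot y$ for some $\alpha,\beta\in K$. *)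

From HB Require Import structures.
From mathcomp Require Import all_boot all_algebra.
Set Implicit Arguments. Unset Strict Implicit. Unset Printing Implicit Defensive.
Import GRing.Theory.
Local Open Scope ring_scope.

Record scalable_monoid (K : pzRingType) := ScalableMonoid {
  sm_car :> Type;
  sm_one : sm_car;
  sm_mul : sm_car -> sm_car -> sm_car;
  sm_scale : K -> sm_car -> sm_car;
  sm_mulA : forall x y z, sm_mul x (sm_mul y z) = sm_mul (sm_mul x y) z;
  sm_mul1x : forall x, sm_mul sm_one x = x;
  sm_mulx1 : forall x, sm_mul x sm_one = x;
  sm_scale1 : forall x, sm_scale 1 x = x;
  sm_scaleA : forall a b x, sm_scale a (sm_scale b x) = sm_scale (a * b) x;
  sm_scale_mull : forall a x y, sm_scale a (sm_mul x y) = sm_mul (sm_scale a x) y;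
  sm_scale_mulr : forall a x y, sm_scale a (sm_mul x y) = sm_mul x (sm_scale a y)
}.

Arguments sm_one {K} s.
Arguments sm_mul {K} s _ _.
Arguments sm_scale {K} s _ _.

Section QS.
Variables (K : fieldType) (X : scalable_monoid K).

(* integer power of an invertible element a with (two-sided) inverse ai *)
Definition zpow (a ai : X) (k : int) : X :=
  match k with
  | Posz m => iter m (sm_mul X a) (sm_one X)
  | Negz m => iter m.+1 (sm_mul X ai) (sm_one X)
  end.

Definition monom (n : nat) (e ei : 'I_n -> X) (k : {ffun 'I_n -> int}) : X :=
  \big[sm_mul X / sm_one X]_(i < n) zpow (e i) (ei i) (k i).

Definition is_basis (n : nat) (e ei : 'I_n -> X) : Prop :=
  injective e /\
  (forall i, sm_mul X (e i) (ei i) = sm_one X /\ sm_mul X (ei i) (e i) = sm_one X) /\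
  (forall x : X, exists! p : K * {ffun 'I_n -> int},
       x = sm_scale X p.1 (monom e ei p.2)).

Definition is_measure (n : nat) (e ei : 'I_n -> X) (x : X) (mu : K) : Prop :=
  exists k : {ffun 'I_n -> int}, x = sm_scale X mu (monom e ei k).

Definition qsim (x y : X) : Prop :=
  exists a b : K, sm_scale X a x = sm_scale X b y.
End QS.

Record quantity_space (K : fieldType) := QuantitySpace {
  qs_sm :> scalable_monoid K;
  qs_comm : forall x y : qs_sm, sm_mul qs_sm x y = sm_mul qs_sm y x;
  qs_has_basis : exists n (e ei : 'I_n -> qs_sm), is_basis e ei
}.

From mathcomp Require Import all_boot all_algebra.
Set Implicit Arguments. Unset Strict Implicit. Unset Printing Implicit Defensive.
Local Open Scope ring_scope.

(* If [a x = b 1] and [x = mu e^k], then [(a mu) e^k = b e^0], so uniqueness of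
   expansions forces [k = 0]: in every basis, [x = mu 1].  Two measures [mu], [mu']
   therefore satisfy [mu 1 = mu' 1], and uniqueness of expansions in a single basis
   gives [mu = mu']. *)

Section BasisExpansion.
Variables (K : fieldType) (X : scalable_monoid K) (n : nat) (e ei : 'I_n -> X).

Lemma monom0 : monom e ei [ffun _ => 0] = sm_one X.
Proof.
rewrite /monom; apply: (big_ind (fun y => y = sm_one X)) => //.
  by move=> y z -> ->; rewrite sm_mul1x.
by move=> i _; rewrite ffunE.
Qed.

Lemma basis_scale_monom_inj (a b : K) (k l : {ffun 'I_n -> int}) :
  is_basis e ei ->
  sm_scale X a (monom e ei k) = sm_scale X b (monom e ei l) -> a = b /\ k = l.
Proof.
move=> [_ [_ uniq_exp]] eq_ab.
have [p [_ p_uniq]] := uniq_exp (sm_scale X a (monom e ei k)).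
have := p_uniq (a, k) erefl; rewrite (p_uniq (b, l) eq_ab).
by case=> -> ->.
Qed.

Lemma basis_scale1_inj (a b : K) :
  is_basis e ei -> sm_scale X a (sm_one X) = sm_scale X b (sm_one X) -> a = b.
Proof.
by move=> B; rewrite -monom0 => /(basis_scale_monom_inj B) [].
Qed.

Lemma measure_qsim1 (x : X) (mu : K) :
  qsim x (sm_one X) -> is_basis e ei -> is_measure e ei x mu ->
  x = sm_scale X mu (sm_one X).
Proof.
move=> [a [b ax_b1]] B [k x_def].
have : sm_scale X (a * mu) (monom e ei k) = sm_scale X b (monom e ei [ffun _ => 0]).
  by rewrite monom0 -ax_b1 x_def sm_scaleA.
by move=> /(basis_scale_monom_inj B) [_ k0]; rewrite x_def k0 monom0.
Qed.

End BasisExpansion.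

Theorem proposition3p16 (K : fieldType) (Q : quantity_space K) (x : Q) :
  qsim x (sm_one Q) ->
  forall (n : nat) (e ei : 'I_n -> Q) (n' : nat) (e' ei' : 'I_n' -> Q),
    is_basis e ei -> is_basis e' ei' ->
    forall mu mu' : K, is_measure e ei x mu -> is_measure e' ei' x mu' ->
    mu = mu'.
Proof.
move=> x_sim1 n e ei n' e' ei' B B' mu mu' M M'.
apply: (basis_scale1_inj B).
by rewrite -(measure_qsim1 x_sim1 B M) -(measure_qsim1 x_sim1 B' M').
Qed.
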